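(* Fix $0<p<1$ and $m\ge1$. For each word $w$ with $|w|\le m-1$ define the weighted sibling difference $h^{(p)}_w=(1-p)1_{C_{w0}}-p\,1_{C_{w2}}$, and set $\phi=1_C$, $q=p^2+(1-p)^2$, $\mu(w)=\mu_p(C_w)$. Then: (1) The family $\{\phi\}\cup\{h^{(p)}_w:|w|\le m-1\}$ is an orthogonal basis of $\mathcal F_m$, and $\|h^{(p)}_w\|^2=p(1-p)\mu(w)$. (2) $K_m$ leaves $\mathcal F_m$ invariant and vanishes on $\mathcal F_m^{\perp}$. (3) For every $w$ with $|w|\le m-1$, $\langle h^{(p)}_w,K_m\phi\rangle=p(1-p)(2p-1)\mu(w)^2\sum_{j=0}^{m-|w|-1}q^j$. (4) For every $w$ with $|w|\le m-1$, $\langle h^{(p)}_w,K_mh^{(p)}_w\rangle=2p^2(1-p)^2\mu(w)^2\sum_{j=0}^{m-|w|-1}q^j$. (5) Let $u\ne v$ be words with $|u|,|v|\le m-1$. If $u,v$ are incomparable then $\langle h^{(p)}_u,K_mh^{(p)}_v\rangle=0$. If $u$ is a proper prefix of $v$, then $\langle h^{(p)}_u,K_mh^{(p)}_v\rangle=p(1-p)^2(2p-1)\mu(v)^2\sum_{j=0}^{m-|v|-1}q^j$ if $v$ begins with $u0$, and $=-p^2(1-p)(2p-1)\mu(v)^2\sum_{j=0}^{m-|v|-1}q^j$ if $v$ begins with $u2$. Consequently, in the orthonormal basis $e_\phi=\phi$, $e_w=h^{(p)}_w/\sqrt{p(1-p)\mu(w)}$ ($|w|\le m-1$), the matrix of $K_m|_{\mathcal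 F_m}$ is self-adjoint and its difference–difference block is tree-banded: $\langle e_v,K_me_u\rangle=0$ unless $u$ and $v$ are comparable. Moreover, $p=\tfrac12$ is the unique parameter in $(0,1)$ for which this matrix is diagonal in the weighted Haar basis.
   Context: Let $S_0(x)=x/3$, $S_2(x)=(x+2)/3$ on $[0,1]$ and let $C$ be the middle-third Cantor set ($C=S_0(C)\cup S_2(C)$). For $0<p<1$, $\mu_p$ is the unique Borel probability measure on $[0,1]$ with $\mu_p=p\,\mu_p\circ S_0^{-1}+(1-p)\,\mu_p\circ S_2^{-1}$ (supported on $C$). Finite words $w=(w_1,\dots,w_n)\in\{0,2\}^n$ have length $|w|=n$; $\varnothing$ is the empty word; $wa$ is concatenation. $u$ is a prefix of $v$ if $v$ extends $u$; $u,v$ are comparable if one is a prefix of the other. $S_w=S_{w_1}\circ\cdots\circ S_{w_n}$ ($S_\varnothing=\mathrm{id}$), and $C_w=S_w(C)$; thus $\mu_p(C_{w0})=p\mu_p(C_w)$, $\mu_p(C_{w2})=(1-p)\mu_p(C_w)$. The inner product on $L^2(\mu_p)$ is $\langle f,g\rangle=\int\overline f g\,d\mu_p$. $\mathcal F_m=\mathrm{span}\{1_{C_u}:|u|\le m\}$ and $K_mf=\sum_{|u|\le m}\langle 1_{C_u},f\rangle1_{C_u}$ for $f\in L^2(\mu_p)$. *)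

From HB Require Import structures.
From mathcomp Require Import all_boot all_order all_algebra.
From mathcomp Require Import all_classical all_reals all_analysis.
Set Implicit Arguments. Unset Strict Implicit. Unset Printing Implicit Defensive.
Import Order.TTheory GRing.Theory Num.Theory.
Import numFieldNormedType.Exports.
Local Open Scope classical_set_scope.
Local Open Scope ring_scope.

Section Cantor.
Variable R : realType.

(* Letters: false stands for the digit 0, true for the digit 2. *)
Definition Smap (a : bool) (x : R) : R := if a then (x + 2) / 3 else x / 3.
Definition S0 : R -> R := Smap false.
Definition S2 : R -> R := Smap true.

Definition Sw (w : seq bool) : R -> R := foldr (fun a f => Smap a \o f) id w.

Definition Cantor : set R :=
  [set x | forall n : nat, exists w : seq bool,
      size w = n /\ exists y : R, 0 <= y <= 1 /\ x = Sw w y].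

Definition Cw (w : seq bool) : set R := Sw w @` Cantor.

Definition sumw (n : nat) (F : seq bool -> R) : R :=
  \sum_(k < n) \sum_(t : k.-tuple bool) F (val t).

Variable mu : {measure set R -> \bar R}.

Definition ip (f g : R -> R) : R := \int[mu]_x (f x * g x).

Definition L2 (f : R -> R) : Prop :=
  measurable_fun setT f /\ (\int[mu]_x ((f x) ^+ 2)%:E < +oo)%E.

Definition inF (m : nat) (g : R -> R) : Prop :=
  measurable_fun setT g /\
  exists c : seq bool -> R,
    {ae mu, forall x, g x = sumw m.+1 (fun u => c u * \1_(Cw u) x)}.

Definition Km (m : nat) (f : R -> R) : R -> R :=
  fun x => sumw m.+1 (fun u => ip \1_(Cw u) f * \1_(Cw u) x).

Definition muw (w : seq bool) : R := fine (mu (Cw w)).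

Definition hw (p : R) (w : seq bool) : R -> R :=
  fun x => (1 - p) * \1_(Cw (rcons w false)) x - p * \1_(Cw (rcons w true)) x.

Definition ebasis (p : R) (o : option (seq bool)) : R -> R :=
  match o with
  | None => \1_Cantor
  | Some w => fun x => hw p w x / Num.sqrt (p * (1 - p) * muw w)
  end.

Definition valid_index (m : nat) (o : option (seq bool)) : bool :=
  match o with None => true | Some w => (size w < m)%N end.

End Cantor.

From Pilot Require Import Defs.
From HB Require Import structures.
From mathcomp Require Import all_boot all_order all_algebra.
From mathcomp Require Import all_classical all_reals all_analysis.
From mathcomp Require Import ring lra measurable_realfun.
Set Implicit Arguments. Unset Strict Implicit. Unset Printing Implicit Defensive.
Import Order.TTheory GRing.Theory Num.Theory.
Import numFieldNormedType.Exports.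
Local Open Scope classical_set_scope.
Local Open Scope ring_scope.

(* Self-similarity gives mu(C_w) = product of the letter weights of w (p for
   the digit 0, 1 - p for the digit 2), and since two cylinders are nested or
   disjoint, <1_{C_s}, 1_{C_t}> is mu(C_t) when s is a prefix of t and 0 when
   s and t are incomparable.  Hence <1_{C_t}, h_w> vanishes unless t extends
   w0 or w2, where it is (1 - p) mu(C_t), resp. - p mu(C_t).  Every entry
   <h_u, K_m h_v> = sum_{|t| <= m} <1_{C_t}, h_u> <1_{C_t}, h_v> is therefore a
   sum of mu(C_t)^2 over the extensions t of one word w, which is
   mu(C_w)^2 sum_j q^j.  When v extends u a, <1_{C_t}, h_u> is a fixed multiple
   of <1_{C_t}, 1_C> for all these t, so <h_u, K_m h_v> is proportional to
   <h_v, K_m 1_C>, which carries the factor 2p - 1. *)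

Section Prefix.
Variable T : eqType.
Implicit Types (x y : T) (s t u v w : seq T).

Lemma prefix_rcons_r s v y : prefix s (rcons v y) = (s == rcons v y) || prefix s v.
Proof.
elim: v s => [|z v IH] [|x s] //=; first by rewrite eqseq_cons orbF.
by rewrite IH eqseq_cons andb_orr.
Qed.

Lemma prefix_rconsN w x : ~~ prefix (rcons w x) w.
Proof. by apply/negP => /size_prefix; rewrite size_rcons ltnn. Qed.

Lemma prefix_rcons2 w x y : prefix (rcons w x) (rcons w y) = (x == y).
Proof. by rewrite prefix_rcons_r eqseq_rcons eqxx (negbTE (prefix_rconsN _ _)) orbF. Qed.

Lemma prefix_rconsl w x t : prefix (rcons w x) t -> prefix w t.
Proof. exact/prefix_trans/prefix_rcons. Qed.

Lemma prefix_total s u t : prefix s t -> prefix u t -> prefix s u || prefix u s.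
Proof.
elim: s u t => [|x s IH] [|z u] [|y t] //=; rewrite ?prefix0s ?orbT //.
by move=> /andP[/eqP -> st] /andP[/eqP -> ut]; rewrite eqxx; exact: IH st ut.
Qed.

Lemma prefix_rcons_inj w x y t : prefix (rcons w x) t -> prefix (rcons w y) t -> x = y.
Proof.
by move=> wx wy; have /orP[] := prefix_total wx wy; rewrite !prefix_rcons2 => /eqP.
Qed.

Lemma prefix_neqP u v : prefix u v -> u != v -> exists x, prefix (rcons u x) v.
Proof.
move=> /prefixP [[|x r] ->]; first by rewrite cats0 eqxx.
by exists x; rewrite -cat_rcons prefix_prefix.
Qed.

End Prefix.

Section CantorCylinders.
Variable R : realType.
Local Notation Cw := (@Cw R).
Local Notation Sw := (@Sw R).
Local Notation I01 := [set x : R | 0 <= x <= 1].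
Implicit Types (a b : bool) (x y z : R) (s t u v w : seq bool).

Lemma Smap01 a y : 0 <= y <= 1 -> 0 <= Smap a y <= 1.
Proof. by case: a; rewrite /Smap => /andP[? ?]; apply/andP; split; lra. Qed.

Lemma Smap_inj a : injective (@Smap R a).
Proof. by case: a; rewrite /Smap => y z; lra. Qed.

(* The two maps have disjoint images [0, 1/3] and [2/3, 1] on [0, 1]. *)
Lemma eq_Smap01 a b y z : 0 <= y <= 1 -> 0 <= z <= 1 ->
  Smap a y = Smap b z -> a = b /\ y = z.
Proof.
by case: a; case: b; rewrite /Smap => /andP[? ?] /andP[? ?] E; split => //; lra.
Qed.

Lemma Sw01 w y : 0 <= y <= 1 -> 0 <= Sw w y <= 1.
Proof. by elim: w => [//|a w IH] /= /IH /Smap01. Qed.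

Lemma Sw_rcons w a y : Sw w (Smap a y) = Sw (rcons w a) y.
Proof. by elim: w => [|b w IH] //=; rewrite IH. Qed.

Lemma Cantor01 x : Cantor x -> 0 <= x <= 1.
Proof. by move=> /(_ 0%N) [w [_ [y [/(Sw01 w) ? ->]]]]. Qed.

Lemma Cantor_Smap a x : Cantor x -> Cantor (Smap a x).
Proof.
move=> Cx [|n].
  by exists [::]; split => //; exists (Smap a x); split => //; exact/Smap01/Cantor01.
have [w [<- [y [y01 ->]]]] := Cx n.
by exists (a :: w); split => //; exists y.
Qed.

Lemma Cantor_Smap_inv x : Cantor x -> exists a y, Cantor y /\ x = Smap a y.
Proof.
move=> Cx; have [w [w1 [y [y01 xE]]]] := Cx 1%N.
case: w w1 xE => [//|a [|//]] _ xE; exists a, y; split => // n.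
have [w' [sw [z [z01 xE']]]] := Cx n.+1; case: w' sw xE' => [//|b w] [sw] xE'.
rewrite xE in xE'; have [_ ->] := eq_Smap01 y01 (Sw01 w z01) xE'.
by exists w; split => //; exists z.
Qed.

Lemma Cw_nil : Cw [::] = @Cantor R.
Proof. exact: image_id. Qed.

Lemma Cw_cons a w : Cw (a :: w) = Smap a @` Cw w.
Proof. by rewrite /Cw -image_comp. Qed.

Lemma Cw_sub_Cantor w : Cw w `<=` @Cantor R.
Proof.
elim: w => [|a w IH]; first by rewrite Cw_nil.
by rewrite Cw_cons => _ [y /IH Cy <-]; exact: Cantor_Smap.
Qed.

Lemma Cw_prefix s t : prefix s t -> Cw t `<=` Cw s.
Proof.
move=> /prefixP [r ->]; elim: s => [|a s IH] /=.
  by rewrite Cw_nil; exact: Cw_sub_Cantor.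
by rewrite !Cw_cons => _ [y /IH Cy <-]; exists y.
Qed.

Lemma Cw_disjoint s t : ~~ prefix s t -> ~~ prefix t s -> Cw s `&` Cw t = set0.
Proof.
elim: s t => [|a s IH] [|b t] //=; rewrite !Cw_cons => st ts.
apply/seteqP; split => // _ [[y Cy <-] [z Cz E]].
have [ba zy] := eq_Smap01 (Cantor01 (Cw_sub_Cantor Cz)) (Cantor01 (Cw_sub_Cantor Cy)) E.
move: st ts Cz; rewrite ba zy eqxx /= => st ts Cz.
by move/seteqP: (IH _ st ts) => [/(_ y (conj Cy Cz))].
Qed.

Lemma indic_Cw_rcons w x :
  \1_(Cw w) x = \1_(Cw (rcons w false)) x + \1_(Cw (rcons w true)) x :> R.
Proof.
rewrite !indicE; have [/set_mem [y Cy <-]|wx] := boolP (x \in Cw w).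
  have [a [z [Cz ->]]] := Cantor_Smap_inv Cy.
  have wa : Cw (rcons w a) (Sw w (Smap a z)) by rewrite Sw_rcons; exists z.
  have wna : ~ Cw (rcons w (~~ a)) (Sw w (Smap a z)).
    have /seteqP[D _] : Cw (rcons w a) `&` Cw (rcons w (~~ a)) = set0.
      by apply: Cw_disjoint; rewrite prefix_rcons2; case: a {wa}.
    by move=> wna; apply: (D _ (conj wa wna)).
  by case: a wa wna => wa wna; rewrite (mem_set wa) memNset ?add0r ?addr0.
rewrite !memNset ?addr0 // => /(Cw_prefix (prefix_rcons w _)) /mem_set; exact/negP.
Qed.

Lemma image_Smap a (A : set R) :
  Smap a @` A = (fun x => 3 * x - (if a then 2 else 0)) @^-1` A.
Proof.
apply/seteqP; split => x /=.
  by case=> y Ay <-; suff -> : 3 * Smap a y - (if a then 2 else 0) = y by [];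
    case: a; rewrite /Smap /=; lra.
by move=> Ax; eexists; first exact: Ax; case: a {Ax}; rewrite /Smap /=; lra.
Qed.

Lemma measurable_image_Smap a (A : set R) : measurable A -> measurable (Smap a @` A).
Proof.
move=> mA; rewrite image_Smap -[_ @^-1` _]setTI.
by apply: measurable_funB => //; exact: measurable_funM.
Qed.

Lemma measurable_preimage_Smap a (A : set R) :
  measurable A -> measurable (Smap a @^-1` A).
Proof.
move=> mA; rewrite -[_ @^-1` _]setTI.
by rewrite /Smap; case: a; apply: measurable_funM => //; exact: measurable_funD.
Qed.

Fixpoint Cantor_level (n : nat) : set R :=
  if n is n'.+1 then Smap false @` Cantor_level n' `|` Smap true @` Cantor_level n'
  else I01.

Lemma measurable_I01 : measurable I01.
Proof.
have -> : I01 = `[0, 1]%classic by apply/seteqP; split => x /=; rewrite in_itv.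
exact: measurable_itv.
Qed.

Lemma measurable_Cantor_level n : measurable (Cantor_level n).
Proof.
elim: n => [|n IH] /=; first exact: measurable_I01.
by apply: measurableU; exact: measurable_image_Smap.
Qed.

Lemma Cantor_levelP n x :
  Cantor_level n x <-> exists w, size w = n /\ exists y, 0 <= y <= 1 /\ x = Sw w y.
Proof.
elim: n x => [|n IH] x /=.
  split=> [x01|[w [_ [y [/(Sw01 w) ? ->]]]]] //.
  by exists [::]; split => //; exists x.
split=> [|[w' [+ [y [y01 ->]]]]]; last first.
  case: w' => [//|a w] [sw].
  have Lw : Cantor_level n (Sw w y) by apply/IH; exists w; split => //; exists y.
  by case: a; [right | left]; exists (Sw w y).
move=> Lx; have [a [z /IH [w [sw [y [y01 ->]]]] <-]] : exists a, (Smap a @` Cantor_level n) x.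
  by case: Lx; [exists false | exists true].
by exists (a :: w); split; [rewrite /= sw | exists y].
Qed.

Lemma Cantor_bigcap : @Cantor R = \bigcap_n Cantor_level n.
Proof. by apply/seteqP; split => x Cx n; [move=> _|]; apply/Cantor_levelP; exact: Cx. Qed.

Lemma measurable_Cantor : measurable (@Cantor R).
Proof.
rewrite Cantor_bigcap; apply: bigcapT_measurable => n.
exact: measurable_Cantor_level.
Qed.

Lemma measurable_Cw w : measurable (Cw w).
Proof.
elim: w => [|a w IH]; first by rewrite Cw_nil; exact: measurable_Cantor.
by rewrite Cw_cons; exact: measurable_image_Smap.
Qed.

End CantorCylinders.

Section SelfSimilarMeasure.
Variables (R : realType) (p : R) (mu : probability R R).
Hypothesis mu01 : mu [set x : R | 0 <= x <= 1] = 1%E.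
Hypothesis mu_selfsim : forall A : set R, measurable A ->
  mu A = (p%:E * mu ((@S0 R) @^-1` A) + (1 - p)%:E * mu ((@S2 R) @^-1` A))%E.

Local Notation I01 := [set x : R | 0 <= x <= 1].

Definition letter_weight (a : bool) : R := if a then 1 - p else p.
Definition word_weight (w : seq bool) : R := \prod_(a <- w) letter_weight a.

Lemma measure_notin01 (A : set R) : measurable A -> A `<=` ~` I01 -> mu A = 0%E.
Proof.
move=> mA AI; have mI := @measurable_I01 R.
have muC0 : mu (~` I01) = 0%E by rewrite probability_setC // mu01 subee.
exact: (subset_measure0 mA (measurableC mI) AI).
Qed.

Lemma mu_image_Smap a (B : set R) : measurable B -> B `<=` I01 ->
  mu (Smap a @` B) = ((letter_weight a)%:E * mu B)%E.
Proof.
move=> mB BI; rewrite mu_selfsim; last exact: measurable_image_Smap.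
have preimage_same b : Smap b @^-1` (Smap b @` B) = B.
  by apply/seteqP; split => x /= => [[y By /Smap_inj <-] | Bx] //; exists x.
have preimage_other : Smap (~~ a) @^-1` (Smap a @` B) `<=` ~` I01.
  move=> x [y By E] x01; have [] := eq_Smap01 x01 (BI _ By) (esym E).
  by case: a {E}.
have mpre b : measurable (Smap b @^-1` (Smap a @` B)).
  exact: (measurable_preimage_Smap b (measurable_image_Smap a mB)).
rewrite /S0 /S2; case: a preimage_other mpre => /= Pother mpre.
  by rewrite (measure_notin01 (mpre false) Pother) preimage_same mule0 add0e.
by rewrite (measure_notin01 (mpre true) Pother) preimage_same mule0 adde0.
Qed.

Lemma mu_Cantor_level n : mu (Cantor_level n) = 1%E.
Proof.
elim: n => [|n IH] /=; first exact: mu01.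
have mL := @measurable_Cantor_level R n.+1.
have preimage1 b : mu (Smap b @^-1` Cantor_level n.+1) = 1%E.
  have mpre := measurable_preimage_Smap b mL.
  apply/eqP; rewrite eq_le probability_le1 //= -IH le_measure ?inE //.
    exact: measurable_Cantor_level R n.
  by move=> x Lx /=; case: b {mpre}; [right | left]; exists x.
by rewrite mu_selfsim //= /S0 /S2 !preimage1 !mule1 -EFinD subrKC.
Qed.

Lemma mu_Cantor : mu (@Cantor R) = 1%E.
Proof.
have mL := @measurable_Cantor_level R; have mC := @measurable_Cantor R.
have muLC n : mu (~` Cantor_level n) = 0%E.
  by rewrite probability_setC // mu_Cantor_level subee.
have muC0 : mu (~` @Cantor R) = 0%E.
  apply/negligibleP; first exact: measurableC.
  rewrite Cantor_bigcap setC_bigcap; apply: negligible_bigcup => n.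
  by apply/negligibleP; [exact: measurableC | exact: muLC].
by rewrite -[@Cantor R]setCK probability_setC ?muC0 ?sube0 //; exact: measurableC.
Qed.

Lemma mu_Cw w : mu (Cw w) = (word_weight w)%:E.
Proof.
elim: w => [|a w IH]; first by rewrite Cw_nil mu_Cantor /word_weight big_nil.
rewrite Cw_cons mu_image_Smap ?IH ?/word_weight ?big_cons ?EFinM //; first exact: measurable_Cw.
by move=> x /Cw_sub_Cantor /Cantor01.
Qed.

End SelfSimilarMeasure.

Section InnerProduct.
Variables (R : realType) (mu : probability R R).
Local Notation ip := (ip mu).
Implicit Types (f g h : R -> R) (c : R).

Definition bounded_measurable f :=
  measurable_fun setT f /\ exists M, forall x, `|f x| <= M.

Lemma bounded_measurable_integrable f :
  bounded_measurable f -> mu.-integrable setT (EFin \o f).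
Proof.
move=> [mf [M fM]]; apply: measurable_bounded_integrable => //.
  exact: (le_lt_trans (probability_le1 mu measurableT) (ltry 1)).
by exists M; split; [exact: num_real | move=> N MN x _; exact: le_trans (fM x) (ltW MN)].
Qed.

Lemma bounded_measurable_cst c : bounded_measurable (fun _ => c).
Proof. by split => //; exists `|c|. Qed.

Lemma bounded_measurable_indic (A : set R) :
  measurable A -> bounded_measurable (\1_A).
Proof.
move=> mA; split; first exact: measurable_indic.
by exists 1 => x; rewrite indicE; case: (_ \in _); rewrite ?normr1 ?normr0.
Qed.

Lemma bounded_measurableD f g : bounded_measurable f -> bounded_measurable g ->
  bounded_measurable (fun x => f x + g x).
Proof.
move=> [mf [M fM]] [mg [N gN]]; split; first exact: measurable_funD.
by exists (M + N) => x; apply: le_trans (ler_normD _ _) (lerD _ _).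
Qed.

Lemma bounded_measurableM f g : bounded_measurable f -> bounded_measurable g ->
  bounded_measurable (fun x => f x * g x).
Proof.
move=> [mf [M fM]] [mg [N gN]]; split; first exact: measurable_funM.
by exists (M * N) => x; rewrite normrM ler_pM.
Qed.

Lemma bounded_measurableB f g : bounded_measurable f -> bounded_measurable g ->
  bounded_measurable (fun x => f x - g x).
Proof.
move=> [mf [M fM]] [mg [N gN]]; split; first exact: measurable_funB.
by exists (M + N) => x; apply: le_trans (ler_normB _ _) (lerD _ _).
Qed.

Lemma bounded_measurable_sum I (r : seq I) (F : I -> R -> R) :
  (forall i, bounded_measurable (F i)) ->
  bounded_measurable (fun x => \sum_(i <- r) F i x).
Proof.
move=> bF; elim: r => [|i r IH].
  by apply: eq_ind (bounded_measurable_cst 0) _ _; apply/funext => x; rewrite big_nil.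
by apply: eq_ind (bounded_measurableD (bF i) IH) _ _; apply/funext => x; rewrite big_cons.
Qed.

Lemma ipC f g : ip f g = ip g f.
Proof. by rewrite /Defs.ip; congr Rintegral; apply/funext => x; rewrite mulrC. Qed.

Lemma ipDr f g h : bounded_measurable f -> bounded_measurable g -> bounded_measurable h ->
  ip f (fun x => g x + h x) = ip f g + ip f h.
Proof.
move=> bf bg bh; rewrite /Defs.ip -RintegralD //;
  try by apply/bounded_measurable_integrable/bounded_measurableM.
by congr Rintegral; apply/funext => x; rewrite mulrDr.
Qed.

Lemma ipBr f g h : bounded_measurable f -> bounded_measurable g -> bounded_measurable h ->
  ip f (fun x => g x - h x) = ip f g - ip f h.
Proof.
move=> bf bg bh; rewrite /Defs.ip -RintegralB //;
  try by apply/bounded_measurable_integrable/bounded_measurableM.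
by congr Rintegral; apply/funext => x; rewrite mulrBr.
Qed.

Lemma ipZr f g c : bounded_measurable f -> bounded_measurable g ->
  ip f (fun x => c * g x) = c * ip f g.
Proof.
move=> bf bg; rewrite /Defs.ip -RintegralZl //;
  last by apply/bounded_measurable_integrable/bounded_measurableM.
by congr Rintegral; apply/funext => x; rewrite mulrCA.
Qed.

Lemma ip_divr f g c : bounded_measurable f -> bounded_measurable g ->
  ip f (fun x => g x / c) = ip f g / c.
Proof.
by move=> bf bg; rewrite mulrC -ipZr //; congr Defs.ip; apply/funext => x; rewrite mulrC.
Qed.

Lemma ip_divl f g c : bounded_measurable f -> bounded_measurable g ->
  ip (fun x => f x / c) g = ip f g / c.
Proof. by move=> bf bg; rewrite ipC ip_divr // ipC. Qed.

Lemma ip_sumr f I (r : seq I) (F : I -> R -> R) :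
  bounded_measurable f -> (forall i, bounded_measurable (F i)) ->
  ip f (fun x => \sum_(i <- r) F i x) = \sum_(i <- r) ip f (F i).
Proof.
move=> bf bF; elim: r => [|i r IH].
  rewrite big_nil -[RHS](mul0r (ip f (fun => 0))) -ipZr //; last exact: bounded_measurable_cst.
  by congr Defs.ip; apply/funext => x; rewrite big_nil mul0r.
rewrite big_cons -IH -ipDr //; last exact: bounded_measurable_sum.
by congr Defs.ip; apply/funext => x; rewrite big_cons.
Qed.

Lemma ip_indic (A B : set R) : measurable A -> measurable B ->
  ip (\1_A) (\1_B) = fine (mu (A `&` B)).
Proof.
move=> mA mB; rewrite /Defs.ip /Rintegral -[A `&` B]setIT -integral_indic //.
  by congr (fine (integral _ _ _)); apply/funext => x; rewrite indicI.
exact: measurableI.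
Qed.

End InnerProduct.

Lemma sum_tuple0 (V : nmodType) (F : seq bool -> V) :
  \sum_(t : 0.-tuple bool) F t = F [::].
Proof. by rewrite (big_pred1 [tuple]) // => t; apply/esym/eqP; exact: tuple0. Qed.

Lemma sum_tupleS (V : nmodType) k (F : seq bool -> V) :
  \sum_(t : k.+1.-tuple bool) F t = \sum_(t : k.-tuple bool) (F (false :: t) + F (true :: t)).
Proof.
rewrite (reindex (fun bt : bool * k.-tuple bool => [tuple of bt.1 :: bt.2])) /=.
  rewrite -(pair_big xpredT xpredT (fun a (t : k.-tuple bool) => F (a :: t))) /=.
  by rewrite big_bool big_split /= addrC.
exists (fun t : k.+1.-tuple bool => (thead t, [tuple of behead t])).
  by move=> [a t] _ /=; congr pair; apply: val_inj.
by move=> t _; rewrite [in RHS](tuple_eta t); apply: val_inj.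
Qed.

Lemma sum_expr_gt0 (F : numDomainType) (x : F) n :
  (0 < n)%N -> 0 <= x -> 0 < \sum_(j < n) x ^+ j.
Proof.
case: n => // n _ x0; rewrite big_ord_recl expr0 ltr_pwDl //.
by apply: sumr_ge0 => i _; exact: exprn_ge0.
Qed.

Section WordSums.
Variable R : realType.
Implicit Types (F G : seq bool -> R) (n : nat).

Lemma sumwD n F G : sumw n (fun u => F u + G u) = sumw n F + sumw n G.
Proof. by rewrite /sumw -big_split; apply: eq_bigr => k _; rewrite big_split. Qed.

Lemma sumwB n F G : sumw n (fun u => F u - G u) = sumw n F - sumw n G.
Proof. by rewrite /sumw -sumrB; apply: eq_bigr => k _; rewrite sumrB. Qed.

Lemma sumwZ n c F : sumw n (fun u => c * F u) = c * sumw n F.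
Proof. by rewrite /sumw mulr_sumr; apply: eq_bigr => k _; rewrite mulr_sumr. Qed.

Lemma eq_sumw n F G : (forall u, (size u < n)%N -> F u = G u) -> sumw n F = sumw n G.
Proof.
by move=> FG; apply: eq_bigr => k _; apply: eq_bigr => t _; rewrite FG ?size_tuple.
Qed.

Lemma sumw_eq0 n F : (forall u, (size u < n)%N -> F u = 0) -> sumw n F = 0.
Proof.
move=> F0; rewrite (@eq_sumw _ _ (fun => 0)) //.
by rewrite /sumw big1 // => k _; rewrite big1.
Qed.

Lemma sum_tuple_delta k s F :
  \sum_(t : k.-tuple bool) (val t == s)%:R * F t = (size s == k)%:R * F s.
Proof.
elim: k s F => [|k IH] s F.
  by rewrite (sum_tuple0 (fun t => (t == s)%:R * F t)); case: s => //= *; rewrite !mul0r.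
rewrite (sum_tupleS _ (fun t => (t == s)%:R * F t)); case: s => [|a s].
  by rewrite big1 ?mul0r // => t _; rewrite !mul0r addr0.
rewrite [RHS]/= eqSS -(IH s (fun t => F (a :: t))); apply: eq_bigr => t _.
by rewrite !eqseq_cons; case: a => /=; rewrite mul0r ?add0r ?addr0.
Qed.

Lemma sumw_delta n s F : (size s < n)%N -> sumw n (fun u => (u == s)%:R * F u) = F s.
Proof.
move=> sn; rewrite /sumw (eq_bigr (fun k : 'I_n => (size s == k)%:R * F s)); last first.
  by move=> k _; exact: sum_tuple_delta.
rewrite (bigD1 (Ordinal sn)) //= eqxx mul1r big1 ?addr0 // => k.
by rewrite -val_eqE /= eq_sym => /negbTE ->; rewrite mul0r.
Qed.

Variable p : R.
Local Notation q := (p ^+ 2 + (1 - p) ^+ 2).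
Local Notation weight := (word_weight p).

Lemma word_weight_cons a w : weight (a :: w) = letter_weight p a * weight w.
Proof. by rewrite /word_weight big_cons. Qed.

Lemma word_weight_rcons w a : weight (rcons w a) = weight w * letter_weight p a.
Proof. by rewrite /word_weight -cats1 big_cat big_seq1. Qed.

Lemma sum_tuple_sqr_weight k : \sum_(t : k.-tuple bool) weight t ^+ 2 = q ^+ k.
Proof.
elim: k => [|k IH].
  by rewrite (sum_tuple0 (fun t => weight t ^+ 2)) /word_weight big_nil expr1n.
rewrite (sum_tupleS _ (fun t => weight t ^+ 2)) exprS -IH mulr_sumr.
by apply: eq_bigr => t _; rewrite !word_weight_cons /letter_weight; ring.
Qed.

Lemma sum_tuple_prefix_sqr_weight s k :
  \sum_(t : k.-tuple bool) (prefix s t)%:R * weight t ^+ 2 =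
  if (size s <= k)%N then weight s ^+ 2 * q ^+ (k - size s) else 0.
Proof.
elim: s k => [|a s IH] k.
  under eq_bigr do rewrite prefix0s mul1r.
  by rewrite leq0n sum_tuple_sqr_weight /word_weight big_nil expr1n mul1r subn0.
case: k => [|k].
  by rewrite (sum_tuple0 (fun t => (prefix (a :: s) t)%:R * weight t ^+ 2)) mul0r.
rewrite (sum_tupleS _ (fun t => (prefix (a :: s) t)%:R * weight t ^+ 2)) /= ltnS subSS.
transitivity (letter_weight p a ^+ 2 *
  \sum_(t : k.-tuple bool) (prefix s t)%:R * weight t ^+ 2).
  rewrite mulr_sumr; apply: eq_bigr => t _.
  by rewrite !word_weight_cons; case: a => /=; ring.
by rewrite IH word_weight_cons; case: ifP => _; [ring | rewrite mulr0].
Qed.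

Lemma sumw_prefix_sqr_weight s n :
  sumw n (fun t => (prefix s t)%:R * weight t ^+ 2) =
  weight s ^+ 2 * \sum_(j < n - size s) q ^+ j.
Proof.
rewrite /sumw; under eq_bigr do rewrite sum_tuple_prefix_sqr_weight.
elim: n => [|n IH]; first by rewrite big_ord0 sub0n big_ord0 mulr0.
rewrite big_ord_recr /= IH; case: (leqP (size s) n) => sn.
  by rewrite subSn // big_ord_recr mulrDr.
have /eqP -> : (n - size s == 0)%N by rewrite subn_eq0 ltnW.
have /eqP -> : (n.+1 - size s == 0)%N by rewrite subn_eq0.
by rewrite addr0.
Qed.

End WordSums.


Section HaarBasis.
Variables (R : realType) (p : R) (mu : probability R R) (m : nat).
Hypothesis mu01 : mu [set x : R | 0 <= x <= 1] = 1%E.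
Hypothesis mu_selfsim : forall A : set R, measurable A ->
  mu A = (p%:E * mu ((@S0 R) @^-1` A) + (1 - p)%:E * mu ((@S2 R) @^-1` A))%E.

Local Notation Cw := (@Cw R).
Local Notation ip := (ip mu).
Local Notation h := (hw p).
Local Notation K := (Km mu m).
Local Notation weight := (word_weight p).
Local Notation phi := (\1_(@Cantor R)).
Local Notation q := (p ^+ 2 + (1 - p) ^+ 2).
Local Notation G w := (\sum_(j < m - size (w : seq bool)) q ^+ j).
Implicit Types (f g : R -> R) (a : bool) (s t u v w : seq bool).

Lemma muw_weight w : muw mu w = weight w.
Proof. exact: (congr1 fine (mu_Cw mu01 mu_selfsim w)). Qed.

Lemma bounded_measurable_Cw w : bounded_measurable (\1_(Cw w)).
Proof. by apply: bounded_measurable_indic; exact: measurable_Cw. Qed.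

Local Hint Resolve bounded_measurable_cst bounded_measurable_Cw
  bounded_measurableM bounded_measurable_sum : core.

Lemma bounded_measurable_hw w : bounded_measurable (h w).
Proof. by apply: bounded_measurableB; auto. Qed.

Lemma bounded_measurable_Cantor : bounded_measurable phi.
Proof. by rewrite -Cw_nil. Qed.

Local Hint Resolve bounded_measurable_hw bounded_measurable_Cantor : core.

Lemma ip_indic_Cw s t : ip (\1_(Cw s)) (\1_(Cw t)) =
  if prefix s t then weight t else if prefix t s then weight s else 0.
Proof.
rewrite ip_indic; [|exact: measurable_Cw..].
case: ifP => st; first by rewrite setIidr; [exact: muw_weight | exact: Cw_prefix].
case: ifP => ts; first by rewrite setIidl; [exact: muw_weight | exact: Cw_prefix].
by rewrite Cw_disjoint ?st ?ts // measure0.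
Qed.

Lemma ip_indic_Cantor u : ip (\1_(Cw u)) phi = weight u.
Proof. by rewrite -Cw_nil ip_indic_Cw prefix0s; case: u. Qed.

Definition haar_coef w t :=
  ((1 - p) * (prefix (rcons w false) t)%:R - p * (prefix (rcons w true) t)%:R) * weight t.

Definition child_coef a := if a then - p else 1 - p.

Lemma ip_indic_hw t w : ip (\1_(Cw t)) (h w) = haar_coef w t.
Proof.
rewrite /hw ipBr ?ipZr ?ip_indic_Cw /haar_coef; auto.
have [tw|tNw] := boolP (prefix t w).
  have tw' b : prefix t (rcons w b) := prefix_trans tw (prefix_rcons w b).
  have wNt b : prefix (rcons w b) t = false.
    by apply/negP => /prefix_trans /(_ tw); apply/negP; exact: prefix_rconsN.
  by rewrite !tw' !wNt !word_weight_rcons /letter_weight /=; ring.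
have child b : (if prefix t (rcons w b) then weight (rcons w b)
    else if prefix (rcons w b) t then weight t else 0) = (prefix (rcons w b) t)%:R * weight t.
  rewrite prefix_rcons_r (negbTE tNw) orbF.
  have [->|_] := eqVneq t (rcons w b); first by rewrite prefix_refl mul1r.
  by case: prefix; rewrite ?mul1r ?mul0r.
by rewrite !child; ring.
Qed.

Lemma haar_coef_child w a t : prefix (rcons w a) t -> haar_coef w t = child_coef a * weight t.
Proof.
move=> wat; have wNat : prefix (rcons w (~~ a)) t = false.
  by apply/negP => /(prefix_rcons_inj wat); case: a {wat}.
by rewrite /haar_coef /child_coef; case: a wat wNat => -> -> /=; ring.
Qed.

Lemma haar_coef_eq0 w t : ~~ prefix w t -> haar_coef w t = 0.
Proof.
move=> wNt; have wNat b : prefix (rcons w b) t = false.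
  by apply/negP => /prefix_rconsl; apply/negP.
by rewrite /haar_coef !wNat /=; ring.
Qed.

Lemma ip_Cantor_Cantor : ip phi phi = 1.
Proof. by rewrite -Cw_nil ip_indic_Cw prefix_refl /word_weight big_nil. Qed.

Lemma ip_Cantor_hw w : ip phi (h w) = 0.
Proof. by rewrite -Cw_nil ip_indic_hw /haar_coef !prefixs0; case: w => [|? ?] /=; ring. Qed.

Lemma ip_hw_hw u v : ip (h u) (h v) = (u == v)%:R * (p * (1 - p) * weight u).
Proof.
rewrite {2}/hw ipBr ?ipZr; auto.
rewrite ![ip (h u) _]ipC !ip_indic_hw /haar_coef.
have [<-|uv] := eqVneq u v.
  by rewrite !prefix_rcons2 /= !word_weight_rcons /letter_weight /=; ring.
by rewrite !prefix_rcons_r !eqseq_rcons (negbTE uv) /= !word_weight_rcons /letter_weight /=; ring.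
Qed.

Lemma ip_Km g f : bounded_measurable g ->
  ip g (K f) = sumw m.+1 (fun u => ip (\1_(Cw u)) f * ip g (\1_(Cw u))).
Proof.
move=> bg; rewrite /Km /sumw ip_sumr; auto; apply: eq_bigr => k _.
by rewrite ip_sumr; auto; apply: eq_bigr => t _; rewrite ipZr.
Qed.

Lemma bounded_measurable_Km f : bounded_measurable (K f).
Proof. by apply: bounded_measurable_sum => k; auto. Qed.

Local Hint Resolve bounded_measurable_Km : core.

Lemma ip_Km_sym f g : bounded_measurable f -> bounded_measurable g ->
  ip f (K g) = ip g (K f).
Proof.
move=> bf bg; rewrite !ip_Km //; apply: eq_sumw => u _.
by rewrite mulrC [ip f _]ipC [ip g _]ipC.
Qed.

Lemma sumw_child_sqr_weight w a :
  sumw m.+1 (fun t => (prefix (rcons w a) t)%:R * weight t ^+ 2) =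
  (weight w * letter_weight p a) ^+ 2 * G w.
Proof. by rewrite sumw_prefix_sqr_weight size_rcons subSS word_weight_rcons. Qed.

Lemma ip_hw_Km_Cantor w :
  ip (h w) (K phi) = p * (1 - p) * (2 * p - 1) * muw mu w ^+ 2 * G w.
Proof.
rewrite ip_Km // (eq_sumw (G := fun t =>
  (1 - p) * ((prefix (rcons w false) t)%:R * weight t ^+ 2)
  - p * ((prefix (rcons w true) t)%:R * weight t ^+ 2))) => [|t _]; last first.
  by rewrite ip_indic_Cantor [ip (h w) _]ipC ip_indic_hw /haar_coef; ring.
by rewrite sumwB !sumwZ !sumw_child_sqr_weight muw_weight /letter_weight /=; ring.
Qed.

Lemma ip_hw_Km_hw w :
  ip (h w) (K (h w)) = 2 * p ^+ 2 * (1 - p) ^+ 2 * muw mu w ^+ 2 * G w.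
Proof.
rewrite ip_Km // (eq_sumw (G := fun t =>
  (1 - p) ^+ 2 * ((prefix (rcons w false) t)%:R * weight t ^+ 2)
  + p ^+ 2 * ((prefix (rcons w true) t)%:R * weight t ^+ 2))) => [|t _]; last first.
  rewrite [ip (h w) _]ipC ip_indic_hw /haar_coef.
  have : ~~ (prefix (rcons w false) t && prefix (rcons w true) t).
    by apply/negP => /andP[/prefix_rcons_inj w0 /w0].
  by case: (prefix (rcons w false) t); case: (prefix (rcons w true) t) => //= _; ring.
by rewrite sumwD !sumwZ !sumw_child_sqr_weight muw_weight /letter_weight /=; ring.
Qed.

Lemma ip_hw_Km_hw_incomparable u v : ~~ prefix u v -> ~~ prefix v u ->
  ip (h u) (K (h v)) = 0.
Proof.
move=> uv vu; rewrite ip_Km //; apply: sumw_eq0 => t _.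
rewrite [ip (h u) _]ipC !ip_indic_hw.
have [ut|/haar_coef_eq0 ->] := boolP (prefix u t); last by rewrite mulr0.
have [vt|/haar_coef_eq0 ->] := boolP (prefix v t); last by rewrite mul0r.
by have := prefix_total ut vt; rewrite (negbTE uv) (negbTE vu).
Qed.

Lemma ip_hw_Km_hw_child u v a : prefix (rcons u a) v ->
  ip (h u) (K (h v)) = child_coef a * ip (h v) (K phi).
Proof.
move=> uav; rewrite !ip_Km // -sumwZ; apply: eq_sumw => t _.
rewrite ip_indic_Cantor [ip (h u) _]ipC [ip (h v) _]ipC !ip_indic_hw.
have [vt|/haar_coef_eq0 ->] := boolP (prefix v t); last by rewrite mul0r !mulr0.
rewrite (haar_coef_child (prefix_trans uav vt)); ring.
Qed.

Definition in_haar_span f := exists (a : R) (b : seq bool -> R),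
  forall x, f x = a * phi x + sumw m (fun w => b w * h w x).

Lemma haar_span0 : in_haar_span (fun => 0).
Proof.
exists 0, (fun => 0) => x.
by rewrite mul0r add0r sumw_eq0 // => u _; rewrite mul0r.
Qed.

Lemma haar_spanD f g : in_haar_span f -> in_haar_span g ->
  in_haar_span (fun x => f x + g x).
Proof.
move=> [a [b fE]] [a' [b' gE]]; exists (a + a'), (fun w => b w + b' w) => x.
have -> : sumw m (fun w => (b w + b' w) * h w x) =
    sumw m (fun w => b w * h w x) + sumw m (fun w => b' w * h w x).
  by rewrite -sumwD; apply: eq_sumw => w _; exact: mulrDl.
by rewrite fE gE; ring.
Qed.

Lemma haar_spanZ c f : in_haar_span f -> in_haar_span (fun x => c * f x).
Proof.
move=> [a [b fE]]; exists (c * a), (fun w => c * b w) => x.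
have -> : sumw m (fun w => c * b w * h w x) = c * sumw m (fun w => b w * h w x).
  by rewrite -sumwZ; apply: eq_sumw => w _; rewrite mulrA.
by rewrite fE; ring.
Qed.

Lemma haar_span_sum I (r : seq I) (F : I -> R -> R) :
  (forall i, in_haar_span (F i)) -> in_haar_span (fun x => \sum_(i <- r) F i x).
Proof.
move=> SF; elim: r => [|i r IH].
  by apply: eq_ind haar_span0 _ _; apply/funext => x; rewrite big_nil.
by apply: eq_ind (haar_spanD (SF i) IH) _ _; apply/funext => x; rewrite big_cons.
Qed.

Lemma haar_span_hw w : (size w < m)%N -> in_haar_span (h w).
Proof.
move=> wm; exists 0, (fun u => (u == w)%:R) => x.
by rewrite (sumw_delta (fun u => h u x) wm) mul0r add0r.
Qed.

(* [1_{w0} = p 1_w + h_w] and [1_{w2} = (1 - p) 1_w - h_w] *)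
Lemma haar_span_indic_Cw u : (size u <= m)%N -> in_haar_span (\1_(Cw u)).
Proof.
elim/last_ind: u => [_|w a IH wm].
  exists 1, (fun => 0) => x; rewrite Cw_nil mul1r sumw_eq0 ?addr0 // => u _.
  by rewrite mul0r.
rewrite size_rcons in wm; have Sw := IH (ltnW wm); have Sh := haar_span_hw wm.
case: a.
  apply: eq_ind (haar_spanD (haar_spanZ (1 - p) Sw) (haar_spanZ (-1) Sh)) _ _.
  by apply/funext => x; rewrite (indic_Cw_rcons w x) /hw; ring.
apply: eq_ind (haar_spanD (haar_spanZ p Sw) (haar_spanZ 1 Sh)) _ _.
by apply/funext => x; rewrite (indic_Cw_rcons w x) /hw; ring.
Qed.

Lemma inF_indic_Cw u : (size u <= m)%N -> inF mu m (\1_(Cw u)).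
Proof.
move=> um; split; first exact: (bounded_measurable_Cw u).1.
exists (fun v => (v == u)%:R); apply: aeW => x.
by rewrite (sumw_delta (fun v => \1_(Cw v) x)).
Qed.

Lemma inF_Cantor : inF mu m phi.
Proof. by rewrite -Cw_nil; exact: inF_indic_Cw. Qed.

Lemma inF_hw w : (size w < m)%N -> inF mu m (h w).
Proof.
move=> wm; split; first exact: (bounded_measurable_hw w).1.
exists (fun v => (1 - p) * (v == rcons w false)%:R - p * (v == rcons w true)%:R).
apply: aeW => x; rewrite (eq_sumw (G := fun v =>
  (1 - p) * ((v == rcons w false)%:R * \1_(Cw v) x)
  - p * ((v == rcons w true)%:R * \1_(Cw v) x))) => [|v _]; last by ring.
by rewrite sumwB !sumwZ !(sumw_delta (fun v => \1_(Cw v) x)) // size_rcons.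
Qed.

Lemma inF_Km f : inF mu m (K f).
Proof.
split; first exact: (bounded_measurable_Km f).1.
by exists (fun u => ip (\1_(Cw u)) f); apply: aeW.
Qed.

Lemma inF_haar_span g : inF mu m g -> exists (a : R) (b : seq bool -> R),
  {ae mu, forall x, g x = a * phi x + sumw m (fun w => b w * h w x)}.
Proof.
move=> [_ [c gc]].
have [a [b ab]] : in_haar_span (fun x => sumw m.+1 (fun u => c u * \1_(Cw u) x)).
  apply: haar_span_sum => k; apply: haar_span_sum => t; apply: haar_spanZ.
  by apply: haar_span_indic_Cw; rewrite size_tuple -ltnS.
by exists a, b; apply: filterS gc => x ->.
Qed.

Lemma Km_orthogonal f : (forall g, inF mu m g -> ip g f = 0) -> {ae mu, forall x, K f x = 0}.
Proof.
move=> fF; apply: aeW => x; apply: sumw_eq0 => u um.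
by rewrite fF ?mul0r //; apply: inF_indic_Cw; rewrite -ltnS.
Qed.

Lemma ip_Km_divr f g c : bounded_measurable f -> bounded_measurable g ->
  ip f (K (fun x => g x / c)) = ip f (K g) / c.
Proof.
move=> bf bg; rewrite !ip_Km // mulrC -sumwZ; apply: eq_sumw => u _.
by rewrite ip_divr //; ring.
Qed.

Hypothesis p01 : 0 < p < 1.

Lemma word_weight_gt0 w : 0 < weight w.
Proof.
have [p0 p1] := andP p01.
elim: w => [|a w IH]; first by rewrite /word_weight big_nil.
by rewrite word_weight_cons mulr_gt0 // /letter_weight; case: a; rewrite ?subr_gt0.
Qed.

Local Notation haar_norm w := (Num.sqrt (p * (1 - p) * muw mu w)).
Local Notation e := (ebasis mu p).

Lemma haar_norm_sqr w : haar_norm w ^+ 2 = p * (1 - p) * weight w.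
Proof.
have [p0 p1] := andP p01.
by rewrite sqr_sqrtr muw_weight // ltW // !mulr_gt0 ?subr_gt0 ?word_weight_gt0.
Qed.

Lemma haar_norm_gt0 w : 0 < haar_norm w.
Proof.
have [p0 p1] := andP p01.
by rewrite sqrtr_gt0 muw_weight !mulr_gt0 ?subr_gt0 ?word_weight_gt0.
Qed.

Lemma bounded_measurable_ebasis o : bounded_measurable (e o).
Proof. by case: o => [w|] /=; auto. Qed.

Lemma ip_ebasis o o' : ip (e o) (e o') = (o == o')%:R.
Proof.
case: o o' => [u|] [v|] /=.
- rewrite ip_divl ?ip_divr ?ip_hw_hw; auto.
  have -> : (Some u == Some v) = (u == v) by [].
  have [<-|uv] := eqVneq u v; last by rewrite !mul0r.
  by rewrite mul1r -haar_norm_sqr expr2 mulfK ?divff ?(gt_eqF (haar_norm_gt0 _)) //.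
- by rewrite ip_divl 1?ipC ?ip_Cantor_hw ?mul0r; auto.
- by rewrite ip_divr ?ip_Cantor_hw ?mul0r; auto.
- exact: ip_Cantor_Cantor.
Qed.

Lemma ip_ebasis_Km_sym o o' : ip (e o) (K (e o')) = ip (e o') (K (e o)).
Proof. by rewrite ip_Km_sym //; exact: bounded_measurable_ebasis. Qed.

Lemma ip_ebasis_Km_incomparable u v : ~~ prefix u v -> ~~ prefix v u ->
  ip (e (Some v)) (K (e (Some u))) = 0.
Proof.
by move=> uv vu /=; rewrite ip_divl ?ip_Km_divr ?ip_hw_Km_hw_incomparable ?mul0r; auto.
Qed.

Lemma ip_hw_Km_Cantor_half w : p = 1 / 2 -> ip (h w) (K phi) = 0.
Proof. by move=> p_half; rewrite ip_hw_Km_Cantor (_ : 2 * p - 1 = 0) ?mulr0 ?mul0r //; lra. Qed.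

Lemma ip_hw_Km_hw_half u v : p = 1 / 2 -> u != v -> ip (h u) (K (h v)) = 0.
Proof.
move=> p_half uv; have [uv'|uNv] := boolP (prefix u v).
  have [a /ip_hw_Km_hw_child ->] := prefix_neqP uv' uv.
  by rewrite ip_hw_Km_Cantor_half ?mulr0.
have [vu|vNu] := boolP (prefix v u); last exact: ip_hw_Km_hw_incomparable.
have vu' : v != u by rewrite eq_sym.
have [a /ip_hw_Km_hw_child Kvu] := prefix_neqP vu vu'.
by rewrite ip_Km_sym // Kvu ip_hw_Km_Cantor_half ?mulr0.
Qed.

Lemma ebasis_Km_diagonal_iff : (0 < m)%N ->
  (forall o o', valid_index m o -> valid_index m o' -> o <> o' ->
     ip (e o) (K (e o')) = 0) <-> p = 1 / 2.
Proof.
move=> m0; split => [diag | p_half]; last first.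
  move=> [u|] [v|] //= _ _ neq; rewrite ?ip_divl ?ip_Km_divr; auto.
  - by rewrite ip_hw_Km_hw_half ?mul0r //; apply/eqP => uv; apply: neq; rewrite uv.
  - by rewrite ip_hw_Km_Cantor_half ?mul0r.
  - by rewrite ip_Km_sym ?ip_hw_Km_Cantor_half ?mul0r.
have [p0 p1] := andP p01.
have G0 : 0 < G [::] by apply: sum_expr_gt0; rewrite ?subn0 // addr_ge0 // sqr_ge0.
have nz : p * (1 - p) * muw mu [::] ^+ 2 * G [::] / haar_norm [::] != 0.
  rewrite gt_eqF // divr_gt0 ?haar_norm_gt0 // muw_weight.
  by rewrite !mulr_gt0 ?exprn_gt0 ?subr_gt0 ?word_weight_gt0.
have := diag None (Some [::]) erefl m0 (fun E => ltac:(discriminate E)).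
rewrite /= ip_Km_divr // ip_Km_sym // ip_hw_Km_Cantor.
move=> K0; have : (2 * p - 1) * (p * (1 - p) * muw mu [::] ^+ 2 * G [::] / haar_norm [::]) = 0.
  by rewrite -[RHS]K0; ring.
by move=> /eqP; rewrite mulf_eq0 (negbTE nz) orbF subr_eq0 => /eqP; lra.
Qed.

End HaarBasis.

Theorem theorem4p1 (R : realType) (p : R) (mu : probability R R) (m : nat) :
  0 < p < 1 -> (0 < m)%N ->
  mu [set x : R | 0 <= x <= 1] = 1%E ->
  (forall A : set R, measurable A ->
     mu A = (p%:E * mu ((@S0 R) @^-1` A) + (1 - p)%:E * mu ((@S2 R) @^-1` A))%E) ->
  let q := p ^+ 2 + (1 - p) ^+ 2 in
  let phi : R -> R := \1_(@Cantor R) in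
  let h := hw p in
  let K := Km mu m in
  let G := fun w : seq bool => \sum_(j < m - size w) q ^+ j in
  (* (1) orthogonal basis of F_m *)
  [/\ inF mu m phi /\ (forall w, (size w < m)%N -> inF mu m (h w)),
      ip mu phi phi != 0 /\ (forall w, (size w < m)%N -> ip mu phi (h w) = 0),
      (forall u v, (size u < m)%N -> (size v < m)%N -> u <> v ->
          ip mu (h u) (h v) = 0),
      (forall w, (size w < m)%N ->
          ip mu (h w) (h w) = p * (1 - p) * muw mu w /\ ip mu (h w) (h w) != 0)
    & (forall g, inF mu m g -> exists (a : R) (b : seq bool -> R),
          {ae mu, forall x, g x = a * phi x + sumw m (fun w => b w * h w x)})] /\
  (* (2) *)
  ((forall f, inF mu m f -> inF mu m (K f)) /\
   (forall f, L2 mu f -> (forall g, inF mu m g -> ip mu g f = 0) ->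
       {ae mu, forall x, K f x = 0})) /\
  (* (3) *)
  (forall w, (size w < m)%N ->
     ip mu (h w) (K phi) = p * (1 - p) * (2 * p - 1) * muw mu w ^+ 2 * G w) /\
  (* (4) *)
  (forall w, (size w < m)%N ->
     ip mu (h w) (K (h w)) = 2 * p ^+ 2 * (1 - p) ^+ 2 * muw mu w ^+ 2 * G w) /\
  (* (5) *)
  (forall u v, u <> v -> (size u < m)%N -> (size v < m)%N ->
     [/\ (~~ prefix u v -> ~~ prefix v u -> ip mu (h u) (K (h v)) = 0),
         (prefix (rcons u false) v ->
            ip mu (h u) (K (h v)) = p * (1 - p) ^+ 2 * (2 * p - 1) * muw mu v ^+ 2 * G v)
       & (prefix (rcons u true) v ->
            ip mu (h u) (K (h v)) = - (p ^+ 2 * (1 - p) * (2 * p - 1) * muw mu v ^+ 2 * G v))]) /\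
  (* consequences in the orthonormal basis *)
  (let e := ebasis mu p in
   [/\ (forall a b, valid_index m a -> valid_index m b ->
          ip mu (e a) (e b) = (a == b)%:R),
       (forall a b, valid_index m a -> valid_index m b ->
          ip mu (e a) (K (e b)) = ip mu (e b) (K (e a))),
       (forall u v, (size u < m)%N -> (size v < m)%N -> ~~ prefix u v -> ~~ prefix v u ->
          ip mu (e (Some v)) (K (e (Some u))) = 0)
     & ((forall a b, valid_index m a -> valid_index m b -> a <> b ->
          ip mu (e a) (K (e b)) = 0) <-> p = 1 / 2)]).
Proof.
move=> p01 m0 mu01 mu_selfsim q phi h K G; have [p0 p1] := andP p01.
have hh := ip_hw_hw mu01 mu_selfsim.
have hKphi := ip_hw_Km_Cantor m mu01 mu_selfsim.
have hchild := ip_hw_Km_hw_child m mu01 mu_selfsim.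
split; first split.
- by split; [exact: inF_Cantor | move=> w; exact: inF_hw].
- by rewrite (ip_Cantor_Cantor mu01 mu_selfsim); split => // w _; exact: ip_Cantor_hw.
- by move=> u v _ _ /eqP uv; rewrite hh (negbTE uv) mul0r.
- move=> w _; rewrite hh eqxx mul1r (muw_weight mu01 mu_selfsim); split => //.
  by rewrite gt_eqF // !mulr_gt0 ?subr_gt0 // (word_weight_gt0 p01).
- by move=> g; exact: inF_haar_span.
split; first by split => f _; [exact: inF_Km | exact: Km_orthogonal].
split; first by move=> w _; exact: ip_hw_Km_Cantor.
split; first by move=> w _; exact: ip_hw_Km_hw.
split.
  move=> u v _ _ _; split; first exact: ip_hw_Km_hw_incomparable.
    by move=> /hchild ->; rewrite hKphi /child_coef /G /q /=; ring.
  by move=> /hchild ->; rewrite hKphi /child_coef /G /q /=; ring.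
split.
- by move=> o o' _ _; exact: ip_ebasis.
- by move=> o o' _ _; exact: ip_ebasis_Km_sym.
- by move=> u v _ _; exact: ip_ebasis_Km_incomparable.
- exact: ebasis_Km_diagonal_iff.
Qed.
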